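(* Let $X$ be a real Banach space and $h:X\times X^*\to\mathbb{R}\cup\{\pm\infty\}$ such that $(\mathcal{J}h)(x,x^* )\geq\langle x,x^*\rangle$ for all $(x,x^* )\in X\times X^*$. Then $$P_2(D(\mathcal{J}h))=P_1\big(D(h^* )\cap(X^*\times X)\big)\subseteq\mathrm{cl}_{w*}\,\mathrm{conv}\,P_2(D(h)),$$ $$P_1(D(\mathcal{J}h))=P_2\big(D(h^* )\cap(X^*\times X)\big)\subseteq\mathrm{cl}\,\mathrm{conv}\,P_1(D(h)).$$
   Context: $X$ is identified with its canonical image in $X^{**}$. $P_1,P_2$ are the canonical projections of a Cartesian product onto its factors; $D(f)=\{z\;|\;f(z)<\infty\}$. The conjugate of $h$ is $h^*:X^*\times X^{**}\to\mathbb{R}\cup\{\pm\infty\}$, $h^*(x^*,x^{**})=\sup_{(y,y^* )}\langle y,x^*\rangle+\langle x^{**},y^*\rangle-h(y,y^* )$, and $(\mathcal{J}h)(x,x^* )=h^*(x^*,x)$. $\mathrm{cl}$ is norm closure, $\mathrm{cl}_{w*}$ weak-$*$ closure in $X^*$, $\mathrm{conv}$ convex hull. *)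

From HB Require Import structures.
From mathcomp Require Import all_boot all_order all_algebra.
From mathcomp Require Import all_classical all_reals all_analysis.
Set Implicit Arguments. Unset Strict Implicit. Unset Printing Implicit Defensive.
Import Order.TTheory GRing.Theory Num.Theory.
Import numFieldNormedType.Exports.
Local Open Scope classical_set_scope.
Local Open Scope ring_scope.

Section Defs.
Variables (R : realType) (X : normedModType R).

Definition dual : set (X -> R) :=
  [set f | (forall (a : R) (x y : X), f (a *: x + y) = a * f x + f y)
           /\ continuous f].

(* Fenchel conjugate of h : X x Xdual -> \bar R, evaluated at (xs, xss),
   where xss in Xbidual is given by its action on Xdual. *)
Definition hconj (h : X -> (X -> R) -> \bar R) (xs : X -> R)
    (xss : (X -> R) -> R) : \bar R :=
  ereal_sup [set ((xs p.1 + xss p.2)%:E - h p.1 p.2)%E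
            | p in [set p : X * (X -> R) | dual p.2]].

Definition canon (x : X) : (X -> R) -> R := fun ys => ys x.

Definition Jh (h : X -> (X -> R) -> \bar R) (x : X) (xs : X -> R) : \bar R :=
  hconj h xs (canon x).

Definition domh (h : X -> (X -> R) -> \bar R) : set (X * (X -> R)) :=
  [set p | dual p.2 /\ (h p.1 p.2 < +oo)%E].

Definition domJh (h : X -> (X -> R) -> \bar R) : set (X * (X -> R)) :=
  [set p | dual p.2 /\ (Jh h p.1 p.2 < +oo)%E].

(* D(hconj) \cap (Xdual x X), X identified with its canonical image in Xbidual *)
Definition domconjX (h : X -> (X -> R) -> \bar R) : set ((X -> R) * X) :=
  [set p | dual p.1 /\ (hconj h p.1 (canon p.2) < +oo)%E].

Definition convX (S : set X) : set X :=
  [set x | exists (n : nat) (w : 'I_n -> R) (p : 'I_n -> X),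
     [/\ forall i, 0 <= w i, \sum_(i < n) w i = 1, forall i, S (p i)
       & x = \sum_(i < n) w i *: p i]].

Definition convD (S : set (X -> R)) : set (X -> R) :=
  [set f | exists (n : nat) (w : 'I_n -> R) (p : 'I_n -> X -> R),
     [/\ forall i, 0 <= w i, \sum_(i < n) w i = 1, forall i, S (p i)
       & f = (fun x => \sum_(i < n) w i * p i x)]].

(* weak-star closure in Xdual: every basic weak-star neighbourhood
   {g | |g x_k - f x_k| < e, k < m} of f meets S *)
Definition wstar_closure (S : set (X -> R)) : set (X -> R) :=
  [set f | dual f /\
     forall (m : nat) (xs : 'I_m -> X) (e : R), 0 < e ->
       exists g, S g /\ forall k, `|g (xs k) - f (xs k)| < e].

End Defs.

From Pilot Require Import Defs.
From HB Require Import structures.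
From mathcomp Require Import all_boot all_order all_algebra.
From mathcomp Require Import all_classical all_reals all_analysis.
From mathcomp Require Import ring lra.
Import Order.TTheory GRing.Theory Num.Theory.
Import numFieldNormedType.Exports.
Local Open Scope classical_set_scope.
Local Open Scope ring_scope.
Set Implicit Arguments. Unset Strict Implicit. Unset Printing Implicit Defensive.

(* Let J := (Jh)(x, x^* ) be finite.  Every (y, y^* ) in D(h) satisfies
   <y, x^* > + <x, y^* > - h(y, y^* ) <= J, and the hypothesis at (x + z, x^* + z^* )
   provides (y, y^* ) in D(h) with
     <y, x^* + z^* > + <x + z, y^* > - h(y, y^* ) > <x + z, x^* + z^* > - 1.
   Subtracting,
     <z, y^* > + <y, z^* > > <z, x^* > + <x, z^* > + <z, z^* > - (J - <x, x^* >) - 1.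
   Taking z^* = 0 and z large (resp. z = 0 and z^* large) makes the constant negligible,
   so no weak-star continuous functional separates x^* from P2(D(h)) and no continuous
   functional separates x from P1(D(h)).  The separation theorem, a consequence of the
   Hahn-Banach theorem, then gives the two closure statements. *)

Definition linear_functional (R : realType) (V : lmodType R) (F : V -> R) :=
  forall a u w, F (a *: u + w) = a * F u + F w.

Section HahnBanach.
Variables (R : realType) (V : lmodType R) (p : V -> R).
Hypothesis p_subadd : forall u w, p (u + w) <= p u + p w.
Hypothesis p_homog : forall a u, 0 < a -> p (a *: u) = a * p u.

Lemma sublinear0 : p 0 = 0.
Proof. by have := p_homog 0 (ltr0Sn R 1); rewrite scaler0; lra. Qed.

Lemma sublinearN u : - p u <= p (- u).
Proof. by have := p_subadd u (- u); rewrite subrr sublinear0; lra. Qed.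

(* Partial linear functionals dominated by [p] are handled through their graphs,
   so that the union of a chain of extensions needs no choice of values. *)
Definition dominated_graph (G : set (V * R)) :=
  [/\ G (0, 0),
      forall k u a w b, G (u, a) -> G (w, b) -> G (k *: u + w, k * a + b),
      forall u a b, G (u, a) -> G (u, b) -> a = b
    & forall u a, G (u, a) -> a <= p u].

Definition graph_dom (G : set (V * R)) : set V := [set u | exists a, G (u, a)].

Definition line_extension (G : set (V * R)) (z : V) (c : R) : set (V * R) :=
  [set ua | exists u a s, G (u, a) /\ ua = (u + s *: z, a + s * c)].

Lemma line_extension_sub G z c : dominated_graph G -> G `<=` line_extension G z c.
Proof.
by case=> G0 _ _ _ [u a] Gua; exists u, a, 0; rewrite scale0r mul0r !addr0.
Qed.

Lemma line_extension_point G z c : dominated_graph G -> line_extension G z c (z, c).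
Proof. by case=> G0 _ _ _; exists 0, 0, 1; rewrite scale1r mul1r !add0r. Qed.

Lemma dominated_graphZ G k u a : dominated_graph G -> G (u, a) -> G (k *: u, k * a).
Proof.
by case=> G0 GD _ _ Gua; have := GD k _ _ _ _ Gua G0; rewrite !addr0.
Qed.

Lemma line_extension_dominated G z c :
  dominated_graph G ->
  (forall u a, G (u, a) -> a - p (u - z) <= c) ->
  (forall u a, G (u, a) -> c <= p (u + z) - a) ->
  forall u a, line_extension G z c (u, a) -> a <= p u.
Proof.
move=> dG c_ge c_le _ _ [u [a [s [Gua [-> ->]]]]].
have [s0|s0|->] := ltrgtP s 0.
- have t0 : 0 < - s by rewrite oppr_gt0.
  have := c_ge _ _ (dominated_graphZ (- s)^-1 dG Gua).
  have -> : u + s *: z = (- s) *: ((- s)^-1 *: u - z).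
    by rewrite scalerBr scalerA mulfV ?gt_eqF // scale1r scaleNr opprK.
  rewrite p_homog //.
  have : - s * ((- s)^-1 * a) = a by rewrite mulrA mulfV ?gt_eqF // mul1r.
  nra.
- have := c_le _ _ (dominated_graphZ s^-1 dG Gua).
  have -> : u + s *: z = s *: (s^-1 *: u + z).
    by rewrite scalerDr scalerA mulfV ?gt_eqF // scale1r.
  rewrite p_homog //.
  have : s * (s^-1 * a) = a by rewrite mulrA mulfV ?gt_eqF // mul1r.
  nra.
- by rewrite scale0r mul0r !addr0; case: dG => _ _ _; apply.
Qed.

Lemma dominated_line_extension G z c :
  dominated_graph G -> ~ graph_dom G z ->
  (forall u a, G (u, a) -> a - p (u - z) <= c) ->
  (forall u a, G (u, a) -> c <= p (u + z) - a) ->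
  dominated_graph (line_extension G z c).
Proof.
move=> dG Gz c_ge c_le; have [G0 GD Gfun _] := dG.
split.
- exact: line_extension_sub.
- move=> k _ _ _ _ [u [a [s [Gua [-> ->]]]]] [w [b [t [Gwb [-> ->]]]]].
  exists (k *: u + w), (k * a + b), (k * s + t); split; first exact: GD.
  congr (_, _); last by ring.
  by rewrite scalerDr scalerA addrACA scalerDl.
- move=> _ a' b' [u [a [s [Gua [-> ->]]]]] [w [b [t [Gwb [Euw ->]]]]].
  have st : s = t.
    apply/eqP; apply/negPn/negP => nst; apply: Gz.
    have Ez : z = (s - t)^-1 *: (w - u).
      apply: (@scalerI _ _ (s - t)); first by rewrite subr_eq0.
      rewrite scalerA mulfV ?subr_eq0 // scale1r scalerBl.
      have -> : w = u + s *: z - t *: z by rewrite Euw addrK.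
      by rewrite addrAC [u + _]addrC addrK.
    exists ((s - t)^-1 * (b - a)); rewrite Ez.
    apply: dominated_graphZ => //.
    by have := GD (-1) _ _ _ _ Gua Gwb; rewrite scaleN1r mulN1r (addrC (- u)) (addrC (- a)).
  by move: Euw; rewrite st => /addIr uw; rewrite -uw in Gwb; rewrite (Gfun _ _ _ Gua Gwb).
- exact: line_extension_dominated.
Qed.

Lemma dominated_graph_line G z :
  dominated_graph G -> ~ graph_dom G z -> exists c, dominated_graph (line_extension G z c).
Proof.
move=> dG Gz; have [G0 GD _ Gp] := dG.
have gap u a w b : G (u, a) -> G (w, b) -> a - p (u - z) <= p (w + z) - b.
  move=> Gua Gwb; have := Gp _ _ (GD 1 _ _ _ _ Gua Gwb); rewrite scale1r mul1r.
  have := p_subadd (u - z) (w + z); rewrite addrACA addNr addr0; lra.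
pose E := [set ua.2 - p (ua.1 - z) | ua in G].
have E0 : E !=set0 by exists (0 - p (0 - z)), (0, 0).
have Eub w b : G (w, b) -> ubound E (p (w + z) - b).
  by move=> Gwb _ [[u a] Gua <-]; exact: gap Gwb.
have hsE : has_sup E by split => //; exists (p (0 + z) - 0); exact: Eub.
exists (sup E); apply: dominated_line_extension => // u a Gua.
- by apply: sup_upper_bound => //; exists (u, a).
- exact: ge_sup E0 (Eub _ _ Gua).
Qed.

Lemma dominated_graph_bigcup I (A : set I) (G : I -> set (V * R)) :
  A !=set0 -> (forall i, A i -> dominated_graph (G i)) ->
  (forall i j, A i -> A j -> G i `<=` G j \/ G j `<=` G i) ->
  dominated_graph (\bigcup_(i in A) G i).
Proof.
move=> [i0 Ai0] dA Atot.
have common i j : A i -> A j -> exists2 k, A k & G i `<=` G k /\ G j `<=` G k.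
  move=> Ai Aj; case: (Atot _ _ Ai Aj) => ij.
  - by exists j => //; split.
  - by exists i => //; split.

split.
- by exists i0 => //; case: (dA _ Ai0).
- move=> k u a w b [i Ai Gi] [j Aj Gj]; have [l Al [il jl]] := common _ _ Ai Aj.
  by exists l => //; case: (dA _ Al) => _ GD _ _; apply: GD; [apply: il | apply: jl].
- move=> u a b [i Ai Gi] [j Aj Gj]; have [l Al [il jl]] := common _ _ Ai Aj.
  by case: (dA _ Al) => _ _ Gfun _; apply: Gfun (il _ Gi) (jl _ Gj).
- by move=> u a [i Ai Gi]; case: (dA _ Ai) => _ _ _; apply.
Qed.

Lemma dominated_graph_total G0 : dominated_graph G0 ->
  exists2 G, dominated_graph G & G0 `<=` G /\ forall u, graph_dom G u.
Proof.
move=> dG0; pose T := {G | dominated_graph G /\ G0 `<=` G}.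
pose le (G1 G2 : T) := `[< sval G1 `<=` sval G2 >].
pose t0 : T := exist _ G0 (conj dG0 (@subset_refl _ G0)).
have [[G [dG G0G]] Gmax] : exists t, premaximal le t.
  apply: (ZL_preorder t0) => [t|r s t /asboolP rs /asboolP st|A Atot].
  - exact/asboolP.
  - by apply/asboolP; apply: subset_trans st.
  - have [[s0 As0]|A0] := pselect (A !=set0); last first.
      by exists t0 => s As; exfalso; apply: A0; exists s.
    have dU : dominated_graph (\bigcup_(s in A) sval s).
      apply: dominated_graph_bigcup => [|s _|s t As At]; first by exists s0.
        exact: (proj2_sig s).1.
      by case: (Atot _ _ As At) => /asboolP; [left|right].
    have G0U : G0 `<=` \bigcup_(s in A) sval s.
      by move=> ua G0ua; exists s0 => //; exact: (proj2_sig s0).2.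
    by exists (exist _ _ (conj dU G0U) : T) => s As; apply/asboolP => ua sua; exists s.
exists G => //; split => // z; apply: contrapT => Gz.
have [c dGc] := dominated_graph_line dG Gz.
have GGc := line_extension_sub z c dG.
have /asboolP GcG := Gmax (exist _ _ (conj dGc (subset_trans G0G GGc)) : T) (asboolT GGc).
by apply: Gz; exists c; apply: GcG; exact: line_extension_point.
Qed.

Lemma dominated_graph_fun G : dominated_graph G -> (forall u, graph_dom G u) ->
  exists F : V -> R,
    [/\ linear_functional F, forall u, F u <= p u & forall u a, G (u, a) -> F u = a].
Proof.
move=> [_ GD Gfun Gp] Gtot; have [F GF] := choice Gtot.
exists F; split => [k u w|u|u a Gua].
- exact: Gfun (GF _) (GD _ _ _ _ _ (GF u) (GF w)).
- exact: Gp _ _ (GF u).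
- exact: Gfun (GF u) Gua.
Qed.

Theorem hahn_banach z0 : exists F : V -> R,
  [/\ linear_functional F, forall u, F u <= p u & F z0 = p z0].
Proof.
have d00 : dominated_graph [set (0, 0)].
  split => //= [k _ _ _ _ [-> ->] [-> ->]|_ _ _ [_ ->] [_ ->]//|_ _ [-> ->]].
  - by rewrite scaler0 mulr0 !addr0.
  - by rewrite sublinear0.
have [G0 dG0 G0z0] : exists2 G0, dominated_graph G0 & G0 (z0, p z0).
  have [->|nz0] := eqVneq z0 0; first by exists [set (0, 0)]; rewrite // sublinear0.
  exists (line_extension [set (0, 0)] z0 (p z0)); last exact: line_extension_point.
  apply: dominated_line_extension => //= [[a [z00 _]]|u a [-> ->]|u a [-> ->]].
  - by move: nz0; rewrite z00 eqxx.
  - by rewrite !sub0r; have := sublinearN z0; lra.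
  - by rewrite add0r subr0.
have [G dG [G0G Gtot]] := dominated_graph_total dG0.
have [F [Flin Fp FG]] := dominated_graph_fun dG Gtot.
by exists F; split => //; apply: FG; apply: G0G.
Qed.

End HahnBanach.

Section LinearFunctional.
Variables (R : realType) (V : lmodType R) (F : V -> R).
Hypothesis F_lin : linear_functional F.

Lemma linear_functional0 : F 0 = 0.
Proof. by have := F_lin 1 0 0; rewrite scaler0 addr0 mul1r; lra. Qed.

Lemma linear_functionalZ a u : F (a *: u) = a * F u.
Proof. by have := F_lin a u 0; rewrite !addr0 linear_functional0 addr0. Qed.

Lemma linear_functionalD u w : F (u + w) = F u + F w.
Proof. by have := F_lin 1 u w; rewrite scale1r mul1r. Qed.

Lemma linear_functionalN u : F (- u) = - F u.
Proof. by rewrite -scaleN1r linear_functionalZ mulN1r. Qed.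

Lemma linear_functionalB u w : F (u - w) = F u - F w.
Proof. by rewrite linear_functionalD linear_functionalN. Qed.

Lemma linear_functional_sum I (r : seq I) (P : pred I) (a : I -> R) (u : I -> V) :
  F (\sum_(i <- r | P i) a i *: u i) = \sum_(i <- r | P i) a i * F (u i).
Proof.
elim/big_rec2: _ => [|i y1 y2 _ <-]; first exact: linear_functional0.
by rewrite linear_functionalD linear_functionalZ.
Qed.
End LinearFunctional.

Section ConeDistance.
Variables (R : realType) (V : normedModType R) (K : set V).
Hypothesis K0 : K 0.
Hypothesis KD : forall k1 k2, K k1 -> K k2 -> K (k1 + k2).
Hypothesis KZ : forall a k, 0 < a -> K k -> K (a *: k).

Definition cone_dist (z : V) := inf [set `|z - k| | k in K].

Let cone_dist_has_inf z : has_inf [set `|z - k| | k in K].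
Proof. by split; [exists `|z - 0|, 0 | exists 0 => _ [k _ <-]]. Qed.

Lemma cone_dist_le z k : K k -> cone_dist z <= `|z - k|.
Proof. by move=> Kk; apply: (ge_inf (cone_dist_has_inf z).2); exists k. Qed.

Lemma cone_dist_ge z r : (forall k, K k -> r <= `|z - k|) -> r <= cone_dist z.
Proof.
by move=> Kr; apply: lb_le_inf (cone_dist_has_inf z).1 _ => _ [k Kk <-]; exact: Kr.
Qed.

Lemma cone_dist_near z e : 0 < e -> exists2 k, K k & `|z - k| < cone_dist z + e.
Proof.
by move=> e0; have [_ [k Kk <-] ?] := inf_adherent e0 (cone_dist_has_inf z); exists k.
Qed.

Lemma cone_distD u w : cone_dist (u + w) <= cone_dist u + cone_dist w.
Proof.
apply/ler_addgt0Pr => e e0; have e2 : 0 < e / 2 by rewrite divr_gt0.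
have [k1 Kk1 h1] := cone_dist_near u e2; have [k2 Kk2 h2] := cone_dist_near w e2.
apply: le_trans (cone_dist_le _ (KD Kk1 Kk2)) _.
rewrite opprD addrACA; apply: le_trans (ler_normD _ _) _; lra.
Qed.

Lemma cone_distZ a u : 0 < a -> cone_dist (a *: u) = a * cone_dist u.
Proof.
move=> a0; have ai0 : 0 < a^-1 by rewrite invr_gt0.
apply/eqP; rewrite eq_le; apply/andP; split; apply/ler_addgt0Pr => e e0.
- have [k Kk h] := cone_dist_near u (divr_gt0 e0 a0).
  apply: le_trans (cone_dist_le _ (KZ a0 Kk)) _.
  rewrite -scalerBr normrZ gtr0_norm //.
  have : a * `|u - k| <= a * (cone_dist u + e / a) by rewrite ler_pM2l // ltW.
  by rewrite mulrDr mulrCA mulfV ?gt_eqF // mulr1.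
- have [k Kk h] := cone_dist_near (a *: u) e0.
  have := cone_dist_le u (KZ ai0 Kk).
  have -> : u - a^-1 *: k = a^-1 *: (a *: u - k).
    by rewrite scalerBr scalerA mulVf ?gt_eqF // scale1r.
  rewrite normrZ gtr0_norm // => h2.
  have : a * cone_dist u <= a * (a^-1 * `|a *: u - k|) by rewrite ler_pM2l.
  rewrite mulrA mulfV ?gt_eqF // mul1r; lra.
Qed.
End ConeDistance.

Lemma convX_seq_combination (R : realType) (V : normedModType R) (C : set V)
    (s : seq (R * V)) :
  (forall q, q \in s -> 0 <= q.1 /\ C q.2) -> 0 < \sum_(q <- s) q.1 ->
  convX C ((\sum_(q <- s) q.1)^-1 *: \sum_(q <- s) q.1 *: q.2).
Proof.
move=> sC W0; set W := \sum_(q <- s) q.1.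
have sCi (i : 'I_(size s)) := sC _ (mem_nth (0, 0) (ltn_ord i)).
exists (size s), (fun i => (nth (0, 0) s i).1 / W), (fun i => (nth (0, 0) s i).2).
split => [i||i|].
- by apply: divr_ge0; [case: (sCi i) | exact: ltW].
- rewrite -mulr_suml; have -> : \sum_(i < size s) (nth (0, 0) s i).1 = W.
    by rewrite /W (big_nth (0, 0)) big_mkord.
  by rewrite mulfV ?gt_eqF.
- by case: (sCi i).
- rewrite scaler_sumr (big_nth (0, 0)) big_mkord.
  by apply: eq_bigr => i _; rewrite scalerA mulrC.
Qed.

Section Separation.
Variables (R : realType) (V : normedModType R) (C : set V) (x : V) (rho : R).

(* The convex cone generated by [C - x + rho B], B the closed unit ball. *)
Definition sep_cone : set V := [set k | exists (s : seq (R * V)) (b : V),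
  [/\ forall q, q \in s -> 0 <= q.1 /\ C q.2, `|b| <= rho * \sum_(q <- s) q.1
    & k = \sum_(q <- s) q.1 *: (q.2 - x) + b]].

Lemma sep_cone0 : sep_cone 0.
Proof. by exists [::], 0; split => //; rewrite ?big_nil ?normr0 ?mulr0 ?addr0. Qed.

Lemma sep_coneD k1 k2 : sep_cone k1 -> sep_cone k2 -> sep_cone (k1 + k2).
Proof.
move=> [s1 [b1 [H1 n1 ->]]] [s2 [b2 [H2 n2 ->]]].
exists (s1 ++ s2), (b1 + b2); split.
- by move=> q; rewrite mem_cat => /orP[/H1|/H2].
- by rewrite big_cat /= mulrDr; apply: le_trans (ler_normD _ _) _; exact: lerD.
- by rewrite big_cat /= addrACA.
Qed.

Lemma sep_coneZ a k : 0 < a -> sep_cone k -> sep_cone (a *: k).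
Proof.
move=> a0 [s [b [H n ->]]].
exists (map (fun q => (a * q.1, q.2)) s), (a *: b); split.
- move=> q /mapP [q' q's ->] /=; have [q'0 Cq'] := H _ q's.
  by split => //; apply: mulr_ge0 => //; exact: ltW.
- by rewrite big_map /= -mulr_sumr normrZ gtr0_norm // mulrCA ler_pM2l.
- rewrite big_map scalerDr scaler_sumr; congr (_ + _).
  by apply: eq_bigr => q _; rewrite scalerA.
Qed.

Lemma sep_cone_shift c b : C c -> `|b| <= rho -> sep_cone (c - x + b).
Proof.
move=> Cc nb; exists [:: (1, c)], b.
by split; rewrite ?big_seq1 ?mulr1 ?scale1r // => q; rewrite inE => /eqP ->.
Qed.

Lemma sep_cone_far c0 k : C c0 -> (forall y, convX C y -> rho <= `|x - y|) ->
  sep_cone k -> rho <= `|(x - c0) - k|.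
Proof.
move=> Cc0 far [s [b [sC nb ->]]].
set W := \sum_(q <- s) q.1 in nb *; set S := \sum_(q <- s) q.1 *: q.2.
have W1 : 0 < 1 + W.
  by rewrite ltr_wpDr // /W big_seq; apply: sumr_ge0 => q /sC [].
pose y := (1 + W)^-1 *: (c0 + S).
have cy : convX C y.
  have := @convX_seq_combination _ _ C ((1, c0) :: s).
  rewrite !big_cons scale1r; apply.
    by move=> q; rewrite inE => /orP[/eqP -> //|/sC].
  exact: W1.
have Wy : (1 + W) *: y = c0 + S by rewrite scalerA mulfV ?scale1r // gt_eqF.
have -> : (x - c0) - (\sum_(q <- s) q.1 *: (q.2 - x) + b) = (1 + W) *: (x - y) - b.
  rewrite scalerBr Wy scalerDl scale1r.
  have -> : \sum_(q <- s) q.1 *: (q.2 - x) = S - W *: x.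
    by rewrite scaler_suml -sumrB; apply: eq_bigr => q _; exact: scalerBr.
  by rewrite !opprD opprK !addrA (addrAC x (W *: x)) (addrAC (x - c0) (W *: x)).
have := far _ cy; have := ler_normD ((1 + W) *: (x - y) - b) b.
rewrite subrK normrZ gtr0_norm //; nra.
Qed.
End Separation.

Theorem separation (R : realType) (V : normedModType R) (C : set V) (x c0 : V) (rho : R) :
  0 < rho -> C c0 -> (forall y, convX C y -> rho <= `|x - y|) ->
  exists F : V -> R, [/\ linear_functional F, forall z, F z <= `|z|
    & exists2 c, 0 < c & forall y, C y -> F y <= F x - c].
Proof.
move=> rho0 Cc0 far; set K := sep_cone C x rho.
(* F <= cone_dist K forces F <= 0 on K, while F (x - c0) = cone_dist K (x - c0) >= rho. *)
have K0 := sep_cone0 C x rho.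
have [F [Flin Fd Fx]] := hahn_banach (cone_distD K0 (@sep_coneD _ _ C x rho))
  (cone_distZ K0 (@sep_coneZ _ _ C x rho)) (x - c0).
have dist_le_norm z : cone_dist K z <= `|z|.
  by have := cone_dist_le K0 z K0; rewrite subr0.
have rho_le : rho <= cone_dist K (x - c0).
  by apply: (cone_dist_ge K0) => k Kk; exact: sep_cone_far Cc0 far Kk.
have nx0 : 0 < `|x - c0| by apply: lt_le_trans rho0 (le_trans rho_le (dist_le_norm _)).
exists F; split => [//|z|]; first exact: le_trans (Fd z) (dist_le_norm z).
exists (rho / `|x - c0| * F (x - c0)).
  by rewrite Fx; apply: mulr_gt0; [exact: divr_gt0 | exact: lt_le_trans rho_le].
move=> y Cy; pose b := (rho / `|x - c0|) *: (x - c0).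
have nb : `|b| <= rho.
  rewrite normrZ ger0_norm; last by rewrite divr_ge0 ?ltW.
  by rewrite -mulrA mulVf ?gt_eqF // mulr1.
have := Fd (y - x + b); have := cone_dist_le K0 (y - x + b) (sep_cone_shift _ Cy nb).
rewrite subrr normr0 /b (linear_functionalD Flin) (linear_functionalB Flin).
rewrite (linear_functionalZ Flin).
lra.
Qed.

Lemma approx_by_scaling (R : realType) (T : Type) (S : set T) (phi : T -> R) (a c : R) :
  (forall t, 0 < t -> exists2 s, S s & t * a - c < t * phi s) ->
  forall e, 0 < e -> exists2 s, S s & a - e < phi s.
Proof.
move=> scaled e e0; have t0 : 0 < (`|c| + 1) / e by rewrite divr_gt0 ?ltr_wpDl.
have [s Ss lt_s] := scaled _ t0; exists s => //.
have te : (`|c| + 1) / e * e = `|c| + 1 by rewrite -mulrA mulVf ?gt_eqF ?mulr1.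
have := ler_norm c; nra.
Qed.

Section Dual.
Variables (R : realType) (X : normedModType R).

Lemma dual_linear (f : X -> R) : dual f -> linear_functional f.
Proof. by case. Qed.

Lemma dual0 : dual (fun _ : X => 0 : R).
Proof. by split => [a u w|z]; [rewrite mulr0 addr0 | exact: cvg_cst]. Qed.

Lemma dualD (f g : X -> R) : dual f -> dual g -> dual (fun y => f y + g y).
Proof.
move=> [lf cf] [lg cg]; split => [a u w|z]; first by rewrite lf lg; ring.
by apply: cvgD; [exact: cf | exact: cg].
Qed.

Lemma dualZ (t : R) (f : X -> R) : dual f -> dual (fun y => t * f y).
Proof.
move=> [lf cf]; split => [a u w|z]; first by rewrite lf; ring.
by apply: cvgM; [exact: cvg_cst | exact: cf].
Qed.

Lemma linear_functional_continuous (F : X -> R) :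
  linear_functional F -> (forall z, F z <= `|z|) -> continuous F.
Proof.
move=> Flin Fn z; apply/cvgrPdist_lt => e e0.
apply/nbhs_ballP; exists e => // w /=; rewrite -ball_normE /= => zw.
rewrite -(linear_functionalB Flin); apply: le_lt_trans zw.
rewrite ler_norml Fn andbT lerNl -(linear_functionalN Flin) -normrN; exact: Fn.
Qed.
End Dual.

Lemma hconj_gt_witness (R : realType) (X : normedModType R) (h : X -> (X -> R) -> \bar R)
    (xs : X -> R) (x : X) (xs' : X -> R) (x' : X) (c : R) :
  (hconj h xs (Defs.canon x) < +oo)%E -> (c%:E < hconj h xs' (Defs.canon x'))%E ->
  exists y ys r, [/\ dual ys, h y ys = r%:E, c < xs' y + ys x' - r &
    ((xs y + ys x - r)%:E <= hconj h xs (Defs.canon x))%E].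
Proof.
move=> Jlt /ereal_sup_gt [_ [[y ys] /= dys <-] c_lt].
have ub : ((xs y + ys x)%:E - h y ys <= hconj h xs (Defs.canon x))%E.
  by apply: ereal_sup_ubound; exists (y, ys).
exists y, ys; move: c_lt ub; case: (h y ys) => [r| |] //= c_lt ub.
- by exists r; split.
- by move: ub; rewrite addey // leye_eq => /eqP J; move: Jlt; rewrite J ltxx.
Qed.

Section JhSupport.
Variables (R : realType) (X : normedModType R) (h : X -> (X -> R) -> \bar R).
Hypothesis Jh_ge : forall x xs, dual xs -> ((xs x)%:E <= Jh h x xs)%E.
Variables (x : X) (xs : X -> R).
Hypothesis xxs_dom : domJh h (x, xs).

Let dxs : dual xs := xxs_dom.1.

Let gap := fine (Jh h x xs) - xs x.

Let Jh_fine : Jh h x xs = (fine (Jh h x xs))%:E.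
Proof.
rewrite fineK // fin_numElt xxs_dom.2 andbT.
exact: lt_le_trans (ltNyr _) (Jh_ge _ dxs).
Qed.

Lemma Jh_support y0 zs e : dual zs -> 0 < e ->
  exists2 yys, domh h yys & xs y0 + zs x + zs y0 - gap - e < yys.2 y0 + zs yys.1.
Proof.
move=> dzs e0.
have dxzs := dualD dxs dzs; set xzs := fun y => _ in dxzs.
have Jlt : (hconj h xs (Defs.canon x) < +oo)%E.
  by move: Jh_fine; rewrite /Jh => ->; exact: ltry.
have gt : ((xzs (x + y0)%R - e)%:E < hconj h xzs (Defs.canon (x + y0)%R))%E.
  by apply: lt_le_trans (Jh_ge _ dxzs); rewrite lte_fin; lra.
have [y [ys [r [dys hr hlt hle]]]] := hconj_gt_witness Jlt gt.
exists (y, ys); first by split => //; rewrite hr ltry.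
move: hlt hle; rewrite -[hconj _ _ _]/(Jh h x xs) Jh_fine lee_fin /xzs /gap /=.
rewrite (linear_functionalD (dual_linear dxs)) (linear_functionalD (dual_linear dzs)).
rewrite (linear_functionalD (dual_linear dys)); lra.
Qed.

Lemma Jh_dual_support z e : 0 < e -> exists2 ys, (snd @` domh h) ys & xs z - e < ys z.
Proof.
move=> e0; apply: (approx_by_scaling (c := gap + 1) _ e0) => t t0.
have [[y ys] yys lt_ys] := Jh_support (t *: z) (@dual0 _ X) ltr01.
exists ys; first by exists (y, ys).
have dys : dual ys := yys.1.
move: lt_ys; rewrite /= (linear_functionalZ (dual_linear dxs)).
rewrite (linear_functionalZ (dual_linear dys)); lra.
Qed.

Lemma Jh_primal_support zs e : dual zs -> 0 < e ->
  exists2 y, (fst @` domh h) y & zs x - e < zs y.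
Proof.
move=> dzs e0; apply: (approx_by_scaling (c := gap + 1) _ e0) => t t0.
have [[y ys] yys lt_ys] := Jh_support 0 (dualZ t dzs) ltr01.
exists y; first by exists (y, ys).
have dys : dual ys := yys.1.
move: lt_ys; rewrite /= (linear_functional0 (dual_linear dxs)).
rewrite (linear_functional0 (dual_linear dzs)) (linear_functional0 (dual_linear dys)); lra.
Qed.
End JhSupport.

Section Bipolar.
Variables (R : realType) (X : normedModType R).

Lemma row_entry_le_norm m (M : 'rV[R]_m) k : `|M ord0 k| <= `|M|.
Proof.
change (`|M ord0 k| <= mx_norm M); rewrite mx_normrE.
by apply/bigmax_geP; right => /=; exists (ord0, k).
Qed.

Lemma row_functional_eval m (F : 'rV[R]_m -> R) (f : X -> R) (pts : 'I_m -> X) :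
  linear_functional F -> linear_functional f ->
  F (\row_k f (pts k)) = f (\sum_(k < m) F (delta_mx ord0 k) *: pts k).
Proof.
move=> Flin flin; rewrite {1}(row_sum_delta (\row_k f (pts k))).
rewrite (linear_functional_sum Flin) (linear_functional_sum flin).
by apply: eq_bigr => k _; rewrite mxE mulrC.
Qed.

Lemma wstar_closure_convD_of_support (S : set (X -> R)) (xs : X -> R) :
  dual xs -> S `<=` @dual R X ->
  (forall z e, 0 < e -> exists2 ys, S ys & xs z - e < ys z) ->
  wstar_closure (convD S) xs.
Proof.
move=> dxs Sd S_supp; split => // m pts e e0; apply: contrapT => not_near.
pose Phi (f : X -> R) : 'rV[R]_m := \row_k f (pts k).
have far y : convX (Phi @` S) y -> e <= `|Phi xs - y|.
  move=> [n [w [q [w0 w1 Sq ->]]]].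
  have /choice [f Sf] i : exists f, S f /\ Phi f = q i by have [f] := Sq i; exists f.
  pose g y := \sum_(i < n) w i * f i y.
  have [k ek] : exists k, e <= `|g (pts k) - xs (pts k)|.
    apply: contrapT => far_k; apply: not_near; exists g; split.
      by exists n, w, f; split => // i; case: (Sf i).
    by move=> k; rewrite ltNge; apply/negP => ek; apply: far_k; exists k.
  apply: le_trans ek (le_trans _ (row_entry_le_norm _ k)).
  rewrite !mxE summxE distrC /g.
  have -> : \sum_(i < n) (w i *: q i) ord0 k = \sum_(i < n) w i * f i (pts k).
    by apply: eq_bigr => i _; rewrite mxE; case: (Sf i) => _ <-; rewrite mxE.
  exact: lexx.
have [ys0 Sys0 _] := S_supp 0 1 ltr01.
have [F [Flin _ [c c0 Fsep]]] := separation e0 (imageP Phi Sys0) far.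
have [ys Sys] := S_supp (\sum_(k < m) F (delta_mx ord0 k) *: pts k) c c0.
have xs_lin := dual_linear dxs; have ys_lin := dual_linear (Sd _ Sys).
by have := Fsep _ (imageP Phi Sys); rewrite /Phi !row_functional_eval //; lra.
Qed.

Lemma closure_convX_of_support (P : set X) (x : X) :
  (forall zs e, dual zs -> 0 < e -> exists2 y, P y & zs x - e < zs y) ->
  closure (convX P) x.
Proof.
move=> P_supp B /nbhs_ballP [rho rho0 Bb]; apply: contrapT => not_near.
have far y : convX P y -> rho <= `|x - y|.
  move=> Py; rewrite leNgt; apply/negP => xy; apply: not_near.
  by exists y; split => //; apply: Bb; rewrite -ball_normE.
have [c0 Pc0 _] := P_supp _ 1 (@dual0 _ X) ltr01.
have [F [Flin Fn [c c_gt0 Fsep]]] := separation rho0 Pc0 far.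
have dF : dual F by split => //; exact: linear_functional_continuous.
have [y Py] := P_supp F c dF c_gt0.
by have := Fsep _ Py; lra.
Qed.
End Bipolar.

Theorem lemma3p2 (R : realType) (X : completeNormedModType R)
    (h : X -> (X -> R) -> \bar R) :
  (forall (x : X) (xs : X -> R), dual xs -> ((xs x)%:E <= Jh h x xs)%E) ->
  [/\ snd @` domJh h = fst @` domconjX h,
      snd @` domJh h `<=` wstar_closure (convD (snd @` domh h)),
      fst @` domJh h = snd @` domconjX h
    & fst @` domJh h `<=` closure (convX (fst @` domh h))].
Proof.
move=> Jh_ge; split.
- by apply/seteqP; split => _ [[a b] [d J] <-]; exists (b, a).
- move=> _ [[x xs] xxs_dom <-] /=; apply: wstar_closure_convD_of_support.
  + exact: xxs_dom.1.
  + by move=> _ [[y ys] [dys _] <-].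
  + by move=> z e; apply: (Jh_dual_support Jh_ge xxs_dom).
- by apply/seteqP; split => _ [[a b] [d J] <-]; exists (b, a).
- move=> _ [[x xs] xxs_dom <-] /=; apply: closure_convX_of_support.
  by move=> zs e; apply: (Jh_primal_support Jh_ge xxs_dom).
Qed.
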